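(* Let $n\ge 1$, $F=\mathbb{F}_{3^n}$, and $G=T_{39}=\langle x,y\mid x^{13}=y^3=1,\ y^{-1}xy=x^3\rangle$. Then the unit group of the group algebra $FG$ satisfies $$\mathcal{U}(FG)\cong C_3^{2n}\times C_{3^n-1}\times GL_3(F)^4.$$
   Context: $\mathcal{U}(R)$ denotes the group of units of a ring $R$; $C_r$ denotes the cyclic group of order $r$, $C_3^{2n}$ the direct product of $2n$ copies of $C_3$; $GL_3(F)$ is the group of invertible $3\times 3$ matrices over $F$, and $GL_3(F)^4$ the direct product of four copies. *)

From HB Require Import structures.
From mathcomp Require Import all_boot all_order all_algebra all_fingroup all_solvable all_field.
Set Implicit Arguments. Unset Strict Implicit. Unset Printing Implicit Defensive.
Import GRing.Theory.
Local Open Scope ring_scope.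

(* The group algebra F[G] of a finite group G (a subgroup of gT) over a field F,
   modelled as functions gT -> F supported on G, with convolution product. *)
Section GroupAlgebra.
Variables (F : finFieldType) (gT : finGroupType) (G : {set gT}).

Definition ga_supp (a : {ffun gT -> F}) : bool :=
  [forall g, (g \notin G) ==> (a g == 0)].

Definition ga_mul (a b : {ffun gT -> F}) : {ffun gT -> F} :=
  [ffun g => \sum_(h in G) a h * b (h^-1 * g)%g].

Definition ga_one : {ffun gT -> F} := [ffun g => (g == 1%g)%:R].

Definition ga_units : {set {ffun gT -> F}} :=
  [set a | ga_supp a &&
     [exists b : {ffun gT -> F},
        [&& ga_supp b, ga_mul a b == ga_one & ga_mul b a == ga_one]]].
End GroupAlgebra.

(* The target group C_3^{2n} x C_{3^n-1} x GL_3(F)^4, with C_r := 'Z_r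
   (integers mod r under addition). *)
Definition target (n : nat) (F : finFieldType) : Type :=
  ({ffun 'I_(2 * n) -> 'Z_3} * 'Z_(3 ^ n - 1) * {ffun 'I_4 -> {'GL_3[F]}})%type.

Definition target_mul (n : nat) (F : finFieldType) (u v : target n F) : target n F :=
  ([ffun i => u.1.1 i + v.1.1 i], u.1.2 + v.1.2, [ffun i => (u.2 i * v.2 i)%g]).

Arguments ga_units F {gT} G.
Arguments ga_mul {F gT} G a b.
Arguments ga_supp {F gT} G a.
Arguments ga_one F gT.

(* Over F_3 the group algebra of G = T_39 = C_13 >| C_3 splits as
   F_3[t]/(t^3) x M_3(F_3)^4. The first factor is F_3[G/<x>] = F_3[C_3], realised by
   upper triangular Toeplitz matrices (x |-> 1, y |-> 1 + N with N the nilpotent shift);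
   the four others are the 3-dimensional irreducible representations, in which x acts by
   the companion matrix of one of the four irreducible cubic factors of the 13th cyclotomic
   polynomial over F_3 (3 has order 3 modulo 13). These five representations embed G into
   GL_3(F)^5, and the induced algebra map F G -> F[t]/(t^3) x M_3(F)^4 is bijective because
   its 39 x 39 matrix has an explicit inverse modulo 3. Hence
   U(F G) = (F[t]/(t^3))^x x GL_3(F)^4. Finally (F[t]/(t^3))^x = F^x x (1 + t F[t]/(t^3)),
   where F^x = C_(3^n - 1) is cyclic and the truncated logarithm maps the unipotent part
   isomorphically onto (F^2, +) = C_3^(2n). *)

From HB Require Import structures.
From mathcomp Require Import all_boot all_order all_algebra all_fingroup all_solvable all_field.
From mathcomp Require Import zify ring.
Set Implicit Arguments. Unset Strict Implicit. Unset Printing Implicit Defensive.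
Import GRing.Theory.

Local Open Scope group_scope.

Section CyclicJoin.
Variables (gT : finGroupType) (p q : nat) (x y : gT).
Hypotheses (pr_p : prime p) (pr_q : prime q) (neq_pq : p != q).
Hypotheses (xp : x ^+ p = 1) (yq : y ^+ q = 1) (nxy : x ^ y \in <[x]>).

Lemma cycle_joinE : <[x]> <*> <[y]> = <[x]> * <[y]>.
Proof. by apply: norm_joinEr; rewrite norms_cycle. Qed.

Lemma card_cycle_join_le : (#|<[x]> <*> <[y]>| <= p * q)%N.
Proof.
have le_x : (#[x] <= p)%N by rewrite dvdn_leq ?prime_gt0 ?order_dvdn ?xp.
have le_y : (#[y] <= q)%N by rewrite dvdn_leq ?prime_gt0 ?order_dvdn ?yq.
rewrite cycle_joinE (leq_trans _ (leq_mul le_x le_y)) // /order.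
by rewrite (mul_cardG <[x]>%G <[y]>%G) leq_pmulr ?cardG_gt0.
Qed.

Hypotheses (ntx : x != 1) (nty : y != 1).

Lemma card_cycle_join : #|<[x]> <*> <[y]>| = (p * q)%N.
Proof.
have ox : #[x] = p := nt_prime_order pr_p xp ntx.
have oy : #[y] = q := nt_prime_order pr_q yq nty.
rewrite cycle_joinE TI_cardMg -/#[x] -/#[y] ?ox ?oy //.
by apply: coprime_TIg; rewrite -/#[x] -/#[y] ox oy prime_coprime // dvdn_prime2.
Qed.

Definition cycle_join_elt (i : 'I_(p * q)) : gT := x ^+ (i %% p) * y ^+ (i %/ p).

Lemma cycle_join_enum : <[x]> <*> <[y]> = [set cycle_join_elt i | i : 'I_(p * q)].
Proof.
have p_gt0 := prime_gt0 pr_p; have q_gt0 := prime_gt0 pr_q.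
apply/eqP; rewrite eqEcard card_cycle_join (leq_trans (leq_imset_card _ _)) ?card_ord //.
rewrite andbT cycle_joinE; apply/subsetP => _ /mulsgP[_ _ /cycleP[i ->] /cycleP[k ->] ->].
have lt_ik : (i %% p + p * (k %% q) < p * q)%N.
  by have := ltn_pmod i p_gt0; have := ltn_pmod k q_gt0; nia.
apply/imsetP; exists (Ordinal lt_ik) => //=; rewrite /cycle_join_elt /=.
rewrite addnC mulnC modnMDl modn_mod divnMDl // divn_small ?ltn_pmod // addn0.
by rewrite -(expg_mod _ xp) -(expg_mod _ yq).
Qed.

Lemma cycle_join_elt_inj : injective cycle_join_elt.
Proof.
have /imset_injP inj_elt : #|[set cycle_join_elt i | i : 'I_(p * q)]| == #|'I_(p * q)|.
  by rewrite -cycle_join_enum card_cycle_join card_ord.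
by move=> i j; apply: inj_elt.
Qed.
End CyclicJoin.

Arguments cycle_join_elt {gT} p q x y i.

Lemma T39_isog_join (gT rT : finGroupType) (G : {group gT}) (X Y : rT) :
    G \isog Grp (x : y : (x ^+ 13 = 1, y ^+ 3 = 1, x ^ y = x ^+ 3)) ->
    X ^+ 13 = 1 -> Y ^+ 3 = 1 -> X ^ Y = X ^+ 3 -> X != 1 -> Y != 1 ->
  G \isog <[X]> <*> <[Y]>.
Proof.
move=> isoG X13 Y3 XY ntX ntY.
have nXY : X ^ Y \in <[X]> by rewrite XY mem_cycle.
have cardH : #|<[X]> <*> <[Y]>| = 39%N by apply: (card_cycle_join (p := 13) (q := 3)).
have homH : (<[X]> <*> <[Y]>)%G \homg Grp (x : y : (x ^+ 13 = 1, y ^+ 3 = 1, x ^ y = x ^+ 3)).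
  by apply/existsP; exists (X, Y); rewrite /= X13 Y3 XY !eqxx.
have cardG : #|G| = 39%N.
  have /existsP[[x y]] := isoGrp_hom isoG.
  rewrite /= !xpair_eqE /= => /and4P[/eqP defG /eqP x13 /eqP y3 /eqP xy].
  apply/eqP; rewrite eqn_leq -{1}defG (card_cycle_join_le (p := 13) (q := 3)) ?xy ?mem_cycle //=.
  by rewrite -cardH dvdn_leq ?cardG_gt0 // card_homg // (isoG _ (<[X]> <*> <[Y]>)%G).
by rewrite isog_sym; apply/(isoGrpP _ isoG); rewrite cardH cardG.
Qed.

Local Open Scope ring_scope.

Lemma ga_mul_supp (F : finFieldType) (gT : finGroupType) (G : {group gT})
    (a b : {ffun gT -> F}) :
  ga_supp G b -> ga_supp G (ga_mul G a b).
Proof.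
move=> /forallP sb; apply/forallP => g; apply/implyP => Gg; rewrite ffunE big1 // => h Gh.
by have := sb (h^-1 * g)%g; rewrite groupMl ?groupV // Gg => /eqP ->; rewrite mulr0.
Qed.

Lemma ga_one_supp (F : finFieldType) (gT : finGroupType) (G : {group gT}) :
  ga_supp G (ga_one F gT).
Proof.
apply/forallP => g; apply/implyP => Gg; rewrite ffunE.
by have [g1 | //] := eqVneq g 1%g; rewrite g1 group1 in Gg.
Qed.

Definition natmx := seq (seq nat).

Section NatMatrix.
Variables (p k : nat).

Definition natmx_entry (M : natmx) (r s : nat) : nat := nth 0%N (nth [::] M r) s.

Definition natmx_mul (M N : natmx) : natmx :=
  mkseq (fun r => mkseq (fun s =>
    (sumn (mkseq (fun j => natmx_entry M r j * natmx_entry N j s) k) %% p)%N) k) k.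

Definition natmx1 : natmx := mkseq (fun r => mkseq (fun s => nat_of_bool (r == s)) k) k.

Definition natmx_exp (M : natmx) (i : nat) : natmx := iter i (natmx_mul M) natmx1.

Variable R : nzRingType.

Definition to_mx (M : natmx) : 'M[R]_k := \matrix_(r, s) (natmx_entry M r s)%:R.

Lemma to_mx_mul (charRp : p \in [pchar R]) M N :
  to_mx (natmx_mul M N) = to_mx M *m to_mx N.
Proof.
apply/matrixP => r s; rewrite !mxE /natmx_entry !nth_mkseq //.
rewrite (GRing.natr_mod_pchar charRp) /mkseq sumnE big_map.
have -> : iota 0 k = index_iota 0 k by rewrite /index_iota subn0.
rewrite big_mkord natr_sum.
by apply: eq_bigr => j _; rewrite !mxE natrM.
Qed.

Lemma to_mx1 : to_mx natmx1 = 1%:M.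
Proof. by apply/matrixP => r s; rewrite !mxE /natmx_entry !nth_mkseq // eq_sym. Qed.

End NatMatrix.

Arguments to_mx k {R} M.


Lemma to_mx_exp (R : nzRingType) p k (charRp : p \in [pchar R]) (M : natmx) i :
  to_mx k.+1 (natmx_exp p k.+1 M i) = to_mx k.+1 M ^+ i :> 'M[R]_k.+1.
Proof.
elim: i => [|i IHi]; first by rewrite to_mx1.
by rewrite /natmx_exp iterS (to_mx_mul _ charRp) -/(natmx_exp _ _ _ _) IHi mulmxE exprS.
Qed.

Definition T39_rep_x : seq natmx := [::
  [:: [:: 1; 0; 0]; [:: 0; 1; 0]; [:: 0; 0; 1]];
  [:: [:: 0; 0; 1]; [:: 1; 0; 0]; [:: 0; 1; 2]];
  [:: [:: 0; 0; 1]; [:: 1; 0; 2]; [:: 0; 1; 2]];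
  [:: [:: 0; 0; 1]; [:: 1; 0; 1]; [:: 0; 1; 0]];
  [:: [:: 0; 0; 1]; [:: 1; 0; 1]; [:: 0; 1; 1]]].

Definition T39_rep_y : seq natmx := [::
  [:: [:: 1; 1; 0]; [:: 0; 1; 1]; [:: 0; 0; 1]];
  [:: [:: 0; 0; 1]; [:: 1; 0; 1]; [:: 2; 1; 0]];
  [:: [:: 0; 0; 1]; [:: 2; 1; 0]; [:: 2; 0; 2]];
  [:: [:: 0; 0; 1]; [:: 1; 2; 2]; [:: 0; 1; 1]];
  [:: [:: 0; 0; 1]; [:: 0; 2; 2]; [:: 1; 2; 1]]].

Definition T39_rep_elt (m k : nat) : natmx :=
  natmx_mul 3 3 (natmx_exp 3 3 (nth [::] T39_rep_x m) (k %% 13))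
                (natmx_exp 3 3 (nth [::] T39_rep_y m) (k %/ 13)).

(* Coordinates on F[t]/(t^3) x M_3(F)^4: for c < 3, the coefficient of t^c, i.e. entry
   (0, c) of block 0; the other 36 run through the entries of blocks 1 to 4, row by row.
   Row k of [fourier_table] lists the coordinates of the image of x^(k %% 13) y^(k %/ 13). *)
Definition fourier_coord_pos (c : nat) : nat * nat * nat :=
  if (c < 3)%N then (0, 0, c)%N else (1 + (c - 3) %/ 9, (c - 3) %% 9 %/ 3, (c - 3) %% 3)%N.

Lemma fourier_coord_pos_bound c : (c < 39)%N ->
  let: (m, r, s) := fourier_coord_pos c in [&& m < 5, r < 3 & s < 3]%N.
Proof.
rewrite /fourier_coord_pos; case: (ltnP c 3) => [c3 _ | c3 c39]; first by rewrite c3.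
by apply/and3P; split; lia.
Qed.

Lemma fourier_coord_posK m r s : (0 < m < 5)%N -> (r < 3)%N -> (s < 3)%N ->
  fourier_coord_pos (3 + 9 * m.-1 + 3 * r + s) = (m, r, s).
Proof. by case: m => [|[|[|[|[|]]]]] //; case: r => [|[|[|]]]; case: s => [|[|[|]]]. Qed.

Definition fourier_table : natmx :=
  mkseq (fun p => mkseq (fun c =>
    let: (m, r, s) := fourier_coord_pos c in natmx_entry (T39_rep_elt m p) r s) 39) 39.

Definition fourier_inv : natmx := [::
  [:: 1; 1; 1; 1; 1; 1; 1; 1; 1; 1; 1; 1; 1; 0; 0; 0; 0; 0; 0; 0; 0; 0; 0; 0; 0; 0; 0; 0; 0; 0; 0; 0; 0; 0; 0; 0; 0; 0; 0];
  [:: 2; 2; 2; 2; 2; 2; 2; 2; 2; 2; 2; 2; 2; 1; 1; 1; 1; 1; 1; 1; 1; 1; 1; 1; 1; 1; 0; 0; 0; 0; 0; 0; 0; 0; 0; 0; 0; 0; 0];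
  [:: 1; 1; 1; 1; 1; 1; 1; 1; 1; 1; 1; 1; 1; 1; 1; 1; 1; 1; 1; 1; 1; 1; 1; 1; 1; 1; 1; 1; 1; 1; 1; 1; 1; 1; 1; 1; 1; 1; 1];
  [:: 1; 0; 1; 1; 1; 2; 2; 0; 1; 2; 1; 0; 0; 2; 1; 0; 0; 1; 0; 1; 1; 1; 2; 2; 0; 1; 0; 1; 0; 1; 1; 1; 2; 2; 0; 1; 2; 1; 0];
  [:: 0; 1; 1; 1; 2; 2; 0; 1; 2; 1; 0; 0; 1; 2; 2; 0; 1; 2; 1; 0; 0; 1; 0; 1; 1; 1; 1; 1; 1; 2; 2; 0; 1; 2; 1; 0; 0; 1; 0];
  [:: 0; 1; 0; 1; 1; 1; 2; 2; 0; 1; 2; 1; 0; 1; 0; 1; 1; 1; 2; 2; 0; 1; 2; 1; 0; 0; 2; 1; 0; 0; 1; 0; 1; 1; 1; 2; 2; 0; 1];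
  [:: 0; 1; 0; 1; 1; 1; 2; 2; 0; 1; 2; 1; 0; 1; 2; 1; 0; 0; 1; 0; 1; 1; 1; 2; 2; 0; 0; 0; 1; 0; 1; 1; 1; 2; 2; 0; 1; 2; 1];
  [:: 1; 0; 1; 1; 1; 2; 2; 0; 1; 2; 1; 0; 0; 1; 2; 2; 0; 1; 2; 1; 0; 0; 1; 0; 1; 1; 0; 1; 1; 1; 2; 2; 0; 1; 2; 1; 0; 0; 1];
  [:: 0; 0; 1; 0; 1; 1; 1; 2; 2; 0; 1; 2; 1; 0; 1; 0; 1; 1; 1; 2; 2; 0; 1; 2; 1; 0; 1; 2; 1; 0; 0; 1; 0; 1; 1; 1; 2; 2; 0];
  [:: 0; 0; 1; 0; 1; 1; 1; 2; 2; 0; 1; 2; 1; 0; 1; 2; 1; 0; 0; 1; 0; 1; 1; 1; 2; 2; 1; 0; 0; 1; 0; 1; 1; 1; 2; 2; 0; 1; 2];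
  [:: 0; 1; 0; 1; 1; 1; 2; 2; 0; 1; 2; 1; 0; 1; 1; 2; 2; 0; 1; 2; 1; 0; 0; 1; 0; 1; 1; 0; 1; 1; 1; 2; 2; 0; 1; 2; 1; 0; 0];
  [:: 1; 0; 0; 1; 0; 1; 1; 1; 2; 2; 0; 1; 2; 0; 0; 1; 0; 1; 1; 1; 2; 2; 0; 1; 2; 1; 0; 1; 2; 1; 0; 0; 1; 0; 1; 1; 1; 2; 2];
  [:: 1; 1; 2; 1; 1; 1; 0; 2; 0; 2; 1; 0; 0; 2; 1; 0; 0; 1; 1; 2; 1; 1; 1; 0; 2; 0; 0; 1; 1; 2; 1; 1; 1; 0; 2; 0; 2; 1; 0];
  [:: 0; 1; 2; 0; 0; 2; 2; 1; 2; 2; 2; 0; 1; 2; 2; 2; 0; 1; 0; 1; 2; 0; 0; 2; 2; 1; 2; 0; 0; 2; 2; 1; 2; 2; 2; 0; 1; 0; 1];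
  [:: 0; 1; 1; 2; 1; 1; 1; 0; 2; 0; 2; 1; 0; 1; 1; 2; 1; 1; 1; 0; 2; 0; 2; 1; 0; 0; 2; 1; 0; 0; 1; 1; 2; 1; 1; 1; 0; 2; 0];
  [:: 0; 1; 1; 2; 1; 1; 1; 0; 2; 0; 2; 1; 0; 0; 2; 1; 0; 0; 1; 1; 2; 1; 1; 1; 0; 2; 0; 0; 1; 1; 2; 1; 1; 1; 0; 2; 0; 2; 1];
  [:: 1; 0; 1; 2; 0; 0; 2; 2; 1; 2; 2; 2; 0; 1; 2; 2; 2; 0; 1; 0; 1; 2; 0; 0; 2; 2; 1; 2; 0; 0; 2; 2; 1; 2; 2; 2; 0; 1; 0];
  [:: 0; 0; 1; 1; 2; 1; 1; 1; 0; 2; 0; 2; 1; 0; 1; 1; 2; 1; 1; 1; 0; 2; 0; 2; 1; 0; 0; 2; 1; 0; 0; 1; 1; 2; 1; 1; 1; 0; 2];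
  [:: 0; 0; 1; 1; 2; 1; 1; 1; 0; 2; 0; 2; 1; 2; 0; 2; 1; 0; 0; 1; 1; 2; 1; 1; 1; 0; 1; 0; 0; 1; 1; 2; 1; 1; 1; 0; 2; 0; 2];
  [:: 0; 1; 0; 1; 2; 0; 0; 2; 2; 1; 2; 2; 2; 2; 1; 2; 2; 2; 0; 1; 0; 1; 2; 0; 0; 2; 0; 1; 2; 0; 0; 2; 2; 1; 2; 2; 2; 0; 1];
  [:: 1; 0; 0; 1; 1; 2; 1; 1; 1; 0; 2; 0; 2; 0; 0; 1; 1; 2; 1; 1; 1; 0; 2; 0; 2; 1; 2; 0; 2; 1; 0; 0; 1; 1; 2; 1; 1; 1; 0];
  [:: 1; 2; 1; 0; 2; 2; 1; 1; 1; 0; 1; 0; 0; 0; 1; 0; 0; 1; 2; 1; 0; 2; 2; 1; 1; 1; 0; 1; 2; 1; 0; 2; 2; 1; 1; 1; 0; 1; 0];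
  [:: 0; 0; 1; 2; 1; 0; 2; 2; 1; 1; 1; 0; 1; 2; 2; 1; 1; 1; 0; 1; 0; 0; 1; 2; 1; 0; 1; 1; 1; 0; 1; 0; 0; 1; 2; 1; 0; 2; 2];
  [:: 0; 1; 2; 1; 0; 2; 2; 1; 1; 1; 0; 1; 0; 1; 2; 1; 0; 2; 2; 1; 1; 1; 0; 1; 0; 0; 0; 1; 0; 0; 1; 2; 1; 0; 2; 2; 1; 1; 1];
  [:: 0; 1; 2; 1; 0; 2; 2; 1; 1; 1; 0; 1; 0; 1; 0; 1; 0; 0; 1; 2; 1; 0; 2; 2; 1; 1; 0; 0; 1; 2; 1; 0; 2; 2; 1; 1; 1; 0; 1];
  [:: 1; 0; 0; 1; 2; 1; 0; 2; 2; 1; 1; 1; 0; 0; 2; 2; 1; 1; 1; 0; 1; 0; 0; 1; 2; 1; 2; 1; 1; 1; 0; 1; 0; 0; 1; 2; 1; 0; 2];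
  [:: 0; 0; 1; 2; 1; 0; 2; 2; 1; 1; 1; 0; 1; 0; 1; 2; 1; 0; 2; 2; 1; 1; 1; 0; 1; 0; 1; 0; 1; 0; 0; 1; 2; 1; 0; 2; 2; 1; 1];
  [:: 0; 0; 1; 2; 1; 0; 2; 2; 1; 1; 1; 0; 1; 1; 1; 0; 1; 0; 0; 1; 2; 1; 0; 2; 2; 1; 1; 0; 0; 1; 2; 1; 0; 2; 2; 1; 1; 1; 0];
  [:: 0; 1; 0; 0; 1; 2; 1; 0; 2; 2; 1; 1; 1; 1; 0; 2; 2; 1; 1; 1; 0; 1; 0; 0; 1; 2; 2; 2; 1; 1; 1; 0; 1; 0; 0; 1; 2; 1; 0];
  [:: 1; 0; 0; 1; 2; 1; 0; 2; 2; 1; 1; 1; 0; 0; 0; 1; 2; 1; 0; 2; 2; 1; 1; 1; 0; 1; 1; 1; 0; 1; 0; 0; 1; 2; 1; 0; 2; 2; 1];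
  [:: 1; 2; 0; 2; 0; 1; 1; 1; 2; 1; 1; 0; 0; 1; 1; 0; 0; 1; 2; 0; 2; 0; 1; 1; 1; 2; 0; 1; 2; 0; 2; 0; 1; 1; 1; 2; 1; 1; 0];
  [:: 0; 2; 2; 2; 1; 2; 2; 0; 0; 2; 1; 0; 1; 2; 2; 1; 2; 2; 0; 0; 2; 1; 0; 1; 0; 2; 0; 0; 2; 1; 0; 1; 0; 2; 2; 2; 1; 2; 2];
  [:: 0; 1; 2; 0; 2; 0; 1; 1; 1; 2; 1; 1; 0; 1; 2; 0; 2; 0; 1; 1; 1; 2; 1; 1; 0; 0; 1; 1; 0; 0; 1; 2; 0; 2; 0; 1; 1; 1; 2];
  [:: 0; 1; 2; 0; 2; 0; 1; 1; 1; 2; 1; 1; 0; 2; 1; 1; 0; 0; 1; 2; 0; 2; 0; 1; 1; 1; 0; 0; 1; 2; 0; 2; 0; 1; 1; 1; 2; 1; 1];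
  [:: 1; 0; 2; 2; 2; 1; 2; 2; 0; 0; 2; 1; 0; 2; 2; 2; 1; 2; 2; 0; 0; 2; 1; 0; 1; 0; 2; 0; 0; 2; 1; 0; 1; 0; 2; 2; 2; 1; 2];
  [:: 0; 0; 1; 2; 0; 2; 0; 1; 1; 1; 2; 1; 1; 0; 1; 2; 0; 2; 0; 1; 1; 1; 2; 1; 1; 0; 2; 1; 1; 0; 0; 1; 2; 0; 2; 0; 1; 1; 1];
  [:: 0; 0; 1; 2; 0; 2; 0; 1; 1; 1; 2; 1; 1; 1; 2; 1; 1; 0; 0; 1; 2; 0; 2; 0; 1; 1; 1; 0; 0; 1; 2; 0; 2; 0; 1; 1; 1; 2; 1];
  [:: 0; 1; 0; 2; 2; 2; 1; 2; 2; 0; 0; 2; 1; 0; 2; 2; 2; 1; 2; 2; 0; 0; 2; 1; 0; 1; 2; 2; 0; 0; 2; 1; 0; 1; 0; 2; 2; 2; 1];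
  [:: 1; 0; 0; 1; 2; 0; 2; 0; 1; 1; 1; 2; 1; 0; 0; 1; 2; 0; 2; 0; 1; 1; 1; 2; 1; 1; 1; 2; 1; 1; 0; 0; 1; 2; 0; 2; 0; 1; 1]].

Lemma T39_rep_relations m : (m < 5)%N ->
  [/\ natmx_exp 3 3 (nth [::] T39_rep_x m) 13 = natmx1 3,
      natmx_exp 3 3 (nth [::] T39_rep_y m) 3 = natmx1 3 &
      natmx_mul 3 3 (nth [::] T39_rep_x m) (nth [::] T39_rep_y m)
        = natmx_mul 3 3 (nth [::] T39_rep_y m) (natmx_exp 3 3 (nth [::] T39_rep_x m) 3)].
Proof. by case: m => [|[|[|[|[|m]]]]] // _; split; vm_compute. Qed.

Lemma fourier_tableK : natmx_mul 3 39 fourier_table fourier_inv = natmx1 39.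
Proof. by vm_compute. Qed.

Lemma sum_ord3 (V : nmodType) (f : 'I_3 -> V) :
  \sum_(k < 3) f k = f ord0 + f (inord 1) + f (inord 2).
Proof.
rewrite !big_ord_recr big_ord0 /= add0r.
by congr (_ + _ + _); congr f; apply: val_inj; rewrite /= ?inordK.
Qed.

Section Toeplitz.
Variable R : comNzRingType.

Definition toeplitz (a b c : R) : 'M[R]_3 :=
  \matrix_(r, s) if (r <= s)%N then nth 0 [:: a; b; c] (s - r) else 0.

Definition toeplitz_coef (A : 'M[R]_3) (k : nat) : R := A ord0 (inord k).

Definition is_toeplitz (A : 'M[R]_3) : Prop :=
  forall r s : 'I_3, A r s = if (r <= s)%N then toeplitz_coef A (s - r) else 0.

Lemma toeplitzM a1 b1 c1 a2 b2 c2 :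
  toeplitz a1 b1 c1 * toeplitz a2 b2 c2 =
  toeplitz (a1 * a2) (a1 * b2 + b1 * a2) (a1 * c2 + b1 * b2 + c1 * a2).
Proof.
apply/matrixP => r s; rewrite !mxE sum_ord3 !mxE !inordK //.
by case: r => [[|[|[|r]]] ?] //; case: s => [[|[|[|s]]] ?] //=; ring.
Qed.

Lemma toeplitz1 : toeplitz 1 0 0 = 1.
Proof.
by apply/matrixP => r s; rewrite !mxE; case: r => [[|[|[|r]]] ?] //; case: s => [[|[|[|s]]] ?].
Qed.

Lemma toeplitz_coefE a b c k :
  (k < 3)%N -> toeplitz_coef (toeplitz a b c) k = nth 0 [:: a; b; c] k.
Proof. by move=> lt_k3; rewrite /toeplitz_coef mxE inordK // subn0. Qed.

Lemma toeplitz_is_toeplitz a b c : is_toeplitz (toeplitz a b c).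
Proof.
move=> r s; rewrite /toeplitz_coef !mxE subn0 leq0n inordK //.
by apply: leq_ltn_trans (leq_subr _ _) (ltn_ord s).
Qed.

Lemma is_toeplitzE A : is_toeplitz A ->
  A = toeplitz (toeplitz_coef A 0) (toeplitz_coef A 1) (toeplitz_coef A 2).
Proof.
move=> tA; apply/matrixP => r s; rewrite tA mxE; case: ifP => // _.
have : (s - r < 3)%N by rewrite (leq_ltn_trans (leq_subr _ _)).
by case: (s - r)%N => [|[|[|]]].
Qed.

Lemma is_toeplitzM A B : is_toeplitz A -> is_toeplitz B -> is_toeplitz (A * B).
Proof.
by move=> /is_toeplitzE -> /is_toeplitzE ->; rewrite toeplitzM; apply: toeplitz_is_toeplitz.
Qed.

Lemma is_toeplitzX A k : is_toeplitz A -> is_toeplitz (A ^+ k).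
Proof.
move=> tA; elim: k => [|k IHk]; last by rewrite exprS; apply: is_toeplitzM.
by rewrite expr0 -toeplitz1; apply: toeplitz_is_toeplitz.
Qed.

Lemma is_toeplitz_sum (I : Type) (r : seq I) (P : pred I) (c : I -> R) (A : I -> 'M_3) :
  (forall i, P i -> is_toeplitz (A i)) -> is_toeplitz (\sum_(i <- r | P i) c i *: A i).
Proof.
move=> tA u v; rewrite /toeplitz_coef !summxE; case: ifP => le_uv.
  by apply: eq_bigr => i Pi; rewrite !mxE tA // le_uv.
by rewrite big1 // => i Pi; rewrite mxE tA // le_uv mulr0.
Qed.

End Toeplitz.

Lemma T39_rep_block0 (R : comNzRingType) :
  to_mx 3 (nth [::] T39_rep_x 0) = toeplitz 1 0 0 :> 'M[R]_3 /\
  to_mx 3 (nth [::] T39_rep_y 0) = toeplitz 1 1 0 :> 'M[R]_3.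
Proof.
by split; apply/matrixP => r s; rewrite !mxE; case: r => [[|[|[|r]]] ?]; case: s => [[|[|[|s]]] ?].
Qed.

Section ToeplitzLog.
Variables (R : fieldType) (charR3 : (3 \in [pchar R])%N).
Local Notation coef := toeplitz_coef.

(* log (1 + u) = u - u^2/2 on the unipotent part u = (b t + c t^2)/a, and -1/2 = 1 in
   characteristic 3. *)
Definition toeplitz_log (A : 'M[R]_3) : R * R :=
  (coef A 1 / coef A 0, coef A 2 / coef A 0 + (coef A 1 / coef A 0) ^+ 2).

Lemma toeplitz_coef0M (A B : 'M[R]_3) : is_toeplitz A -> is_toeplitz B ->
  coef (A * B) 0 = coef A 0 * coef B 0.
Proof.
move=> /is_toeplitzE eA /is_toeplitzE eB.
move: (coef A 0) (coef A 1) (coef A 2) eA (coef B 0) (coef B 1) (coef B 2) eB.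
by move=> a1 b1 c1 -> a2 b2 c2 ->; rewrite toeplitzM !toeplitz_coefE.
Qed.

Lemma toeplitz_logM (A B : 'M[R]_3) :
    is_toeplitz A -> is_toeplitz B -> coef A 0 != 0 -> coef B 0 != 0 ->
  toeplitz_log (A * B) =
    ((toeplitz_log A).1 + (toeplitz_log B).1, (toeplitz_log A).2 + (toeplitz_log B).2).
Proof.
move=> /is_toeplitzE eA /is_toeplitzE eB.
move: (coef A 0) (coef A 1) (coef A 2) eA (coef B 0) (coef B 1) (coef B 2) eB.
move=> a1 b1 c1 -> a2 b2 c2 ->; rewrite /toeplitz_log toeplitzM !toeplitz_coefE //=.
move=> a1_neq0 a2_neq0.
congr (_, _); first by field; apply/andP.
have three0 : 3%:R = 0 :> R := pcharf0 charR3.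
rewrite -[RHS]addr0 -(mul0r (b1 / a1 * (b2 / a2))) -three0.
by field; apply/andP.
Qed.

Lemma toeplitz_log_inj (A B : 'M[R]_3) : is_toeplitz A -> is_toeplitz B -> coef A 0 != 0 ->
  coef A 0 = coef B 0 -> toeplitz_log A = toeplitz_log B -> A = B.
Proof.
move=> tA tB a_neq0 e0 [/= e1 e2]; have b_neq0 : coef B 0 != 0 by rewrite -e0.
have e1' : coef A 1 = coef B 1 by rewrite -(divfK a_neq0 (coef A 1)) e1 e0 divfK.
have e2' : coef A 2 = coef B 2.
  by move: e2; rewrite e1 => /addIr e2; rewrite -(divfK a_neq0 (coef A 2)) e2 e0 divfK.
by rewrite (is_toeplitzE tA) (is_toeplitzE tB) e0 e1' e2'.
Qed.

Lemma toeplitz_logK (a x y : R) :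
  a != 0 -> toeplitz_log (toeplitz a (a * x) (a * (y - x ^+ 2))) = (x, y).
Proof.
by move=> a_neq0; rewrite /toeplitz_log !toeplitz_coefE //= ![a * _]mulrC !mulfK // subrK.
Qed.

End ToeplitzLog.

Lemma toeplitz_unit (R : fieldType) (a b c : R) : a != 0 ->
  exists a' b' c',
    toeplitz a b c * toeplitz a' b' c' = 1 /\ toeplitz a' b' c' * toeplitz a b c = 1.
Proof.
move=> a_neq0; exists a^-1, (- b / a ^+ 2), ((b ^+ 2 / a - c) / a ^+ 2).
by rewrite !toeplitzM -toeplitz1; split; congr toeplitz; field.
Qed.

Section FfunPair.
Variables (V : nmodType) (n : nat).

Definition ffun_pair (u v : {ffun 'I_n -> V}) : {ffun 'I_(2 * n) -> V} :=
  [ffun i => match split (cast_ord (etrans (mul2n n) (esym (addnn n))) i) with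
             | inl j => u j | inr j => v j end].

Lemma ffun_pairD u v u' v' :
  ffun_pair (u + u') (v + v') = [ffun i => ffun_pair u v i + ffun_pair u' v' i].
Proof. by apply/ffunP => i; rewrite !ffunE; case: split => j; rewrite ffunE. Qed.

Lemma ffun_pair_inj u v u' v' : ffun_pair u v = ffun_pair u' v' -> u = u' /\ v = v'.
Proof.
move/ffunP => e; split; apply/ffunP => j.
  have := e (cast_ord (esym (etrans (mul2n n) (esym (addnn n)))) (unsplit (inl j : 'I_n + 'I_n))).
  by rewrite !ffunE cast_ordKV unsplitK.
have := e (cast_ord (esym (etrans (mul2n n) (esym (addnn n)))) (unsplit (inr j : 'I_n + 'I_n))).
by rewrite !ffunE cast_ordKV unsplitK.
Qed.

Lemma ffun_pair_surj w : exists u v, ffun_pair u v = w.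
Proof.
pose c := cast_ord (esym (etrans (mul2n n) (esym (addnn n)))).
exists [ffun j => w (c (lshift n j))], [ffun j => w (c (rshift n j))].
apply/ffunP => i; rewrite ffunE.
by case: splitP => j /= ij; rewrite ffunE; congr (w _); apply: val_inj; rewrite /= ij.
Qed.

End FfunPair.

Lemma finField_coords (F : finFieldType) (p n : nat) :
  (p \in [pchar F])%N -> #|F| = (p ^ n)%N ->
  exists crd : F -> {ffun 'I_n -> 'F_p}, {morph crd : x y / x + y} /\ bijective crd.
Proof.
move=> charFp cardF; have := pprimeChar_vectAxiom charFp.
have -> : logn p #|pPrimeCharType charFp| = n by rewrite cardF pfactorK ?(pcharf_prime charFp).
case=> v2r lin_v2r [r2v v2rK r2vK].
exists (fun x => [ffun i => v2r x 0 i]); split.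
  move=> x y; apply/ffunP => i; rewrite !ffunE.
  by have := lin_v2r 1 x y; rewrite !scale1r => ->; rewrite mxE.
exists (fun u : {ffun 'I_n -> 'F_p} => r2v (\row_i u i) : F) => [x | u].
  by rewrite -[RHS]v2rK; congr r2v; apply/rowP => i; rewrite !mxE ffunE.
by apply/ffunP => i; rewrite ffunE r2vK mxE.
Qed.

Lemma finField_log (F : finFieldType) (m : nat) : #|F| = m.+1 -> (1 < m)%N ->
  exists lg : F -> 'Z_m,
    [/\ {in predC1 0 &, {morph lg : a b / a * b >-> a + b}},
        {in predC1 0 &, injective lg} & forall k, exists2 a, a != 0 & lg a = k].
Proof.
move=> cardF m_gt1.
have modE a : (a %% (Zp_trunc m).+2 = a %% m)%N by rewrite Zp_cast.
have [u defU] := cyclicP (field_unit_group_cyclic [set: {unit F}]%G).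
have ou : #[u]%g = m by rewrite /order -defU card_finField_unit cardF.
pose ex (k : 'Z_m) : F := FinRing.uval (u ^+ k)%g.
have exD k l : ex (k + l) = ex k * ex l.
  rewrite /ex -FinRing.val_unitM -expgD; congr FinRing.uval.
  by rewrite -(expg_mod_order u (k + l)%N) ou /= modE.
have ex_neq0 k : ex k != 0 by rewrite -unitfE; apply: valP.
have ex_inj : injective ex.
  move=> k l /val_inj /eqP; rewrite eq_expg_mod_order ou => /eqP.
  have lt_m (j : 'Z_m) : (j < m)%N by rewrite -[in X in (_ < X)%N](Zp_cast m_gt1).
  by rewrite !modn_small // => /val_inj.
have ex_surj a : a != 0 -> exists k, ex k = a.
  rewrite -unitfE => ua; have : FinRing.unit F ua \in <[u]>%g by rewrite -defU inE.
  case/cycleP => i ei; exists (inZp i).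
  by rewrite /ex /= modE -ou expg_mod_order -ei.
pose lg (a : F) : 'Z_m := odflt 0 [pick k | ex k == a].
have lgK k : lg (ex k) = k.
  by rewrite /lg; case: pickP => [l /eqP/ex_inj // | /(_ k)]; rewrite eqxx.
exists lg; split.
- by move=> a b /ex_surj[k <-] /ex_surj[l <-]; rewrite -exD !lgK.
- by move=> a b /ex_surj[k <-] /ex_surj[l <-]; rewrite !lgK => ->.
by move=> k; exists (ex k); rewrite ?lgK.
Qed.

Lemma unit_of_expr_eq1 (R : unitRingType) (x : R) k : x ^+ k.+1 = 1 -> x \is a GRing.unit.
Proof. by move=> xk; apply/unitrP; exists (x ^+ k); rewrite -exprS -exprSr. Qed.

Lemma ffun_exprE (aT : finType) (R : pzRingType) (f : {ffun aT -> R}) k x :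
  (f ^+ k) x = f x ^+ k.
Proof. by elim: k => [|k IHk]; rewrite ?ffunE // !exprS ffunE IHk. Qed.

Lemma ffun_mulE (aT : finType) (R : pzRingType) (f g : {ffun aT -> R}) x :
  (f * g) x = f x * g x.
Proof. exact: ffunE. Qed.

Lemma ffun_scaleE (R : pzRingType) (aT : finType) (V : lmodType R) (k : R)
    (f : {ffun aT -> V}) x :
  (k *: f) x = k *: f x.
Proof. exact: ffunE. Qed.

Notation blockmx R := {ffun 'I_5 -> 'M[R]_3}.

Section T39Representation.
Variables (F : finFieldType) (charF3 : (3 \in [pchar F])%N).

Definition blockGL := {dffun forall i : 'I_5, {'GL_3[F]}}.

Definition mkGL (A : 'M[F]_3) : {'GL_3[F]} := insubd (1%g : {'GL_3[F]}) A.

Lemma mkGLK A : A \is a GRing.unit -> GLval (mkGL A) = A.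
Proof. by move=> uA; rewrite /mkGL insubdK. Qed.

Lemma mkGLM (A B : 'M[F]_3) : A \is a GRing.unit -> B \is a GRing.unit ->
  mkGL (A * B) = (mkGL A * mkGL B)%g.
Proof.
move=> uA uB; apply: val_inj; change (GLval (mkGL (A * B)) = GLval (mkGL A * mkGL B)%g).
by rewrite GL_ME !mkGLK ?unitrMl.
Qed.

Definition blocks (g : blockGL) : blockmx F := [ffun i => GLval (g i)].

Lemma blocks_inj : injective blocks.
Proof.
by move=> g h /ffunP e; apply/ffunP => i; apply: val_inj; have := e i; rewrite !ffunE.
Qed.

Lemma blocksM g h : blocks (g * h)%g = blocks g * blocks h.
Proof. by apply/ffunP => i; rewrite !ffunE. Qed.

Lemma blocks1 : blocks 1%g = 1.
Proof. by apply/ffunP => i; rewrite !ffunE. Qed.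

Lemma blocksX g k : blocks (g ^+ k)%g = blocks g ^+ k.
Proof. by elim: k => [|k IHk]; rewrite ?blocks1 // expgS exprS blocksM IHk. Qed.

Definition natmx_blocks (L : seq natmx) : blockmx F :=
  [ffun i : 'I_5 => to_mx 3 (nth [::] L i)].

Definition natmx_GL (L : seq natmx) : blockGL := [ffun i => mkGL (natmx_blocks L i)].

Lemma blocks_natmx_GL L k : natmx_blocks L ^+ k.+1 = 1 -> blocks (natmx_GL L) = natmx_blocks L.
Proof.
move=> Lk; apply/ffunP => i.
have uLi : natmx_blocks L i \is a GRing.unit.
  by apply: (@unit_of_expr_eq1 _ _ k); rewrite -(ffun_exprE (natmx_blocks _)) Lk ffunE.
by rewrite ffunE /natmx_GL ffunE mkGLK.
Qed.

Definition T39_X : blockGL := natmx_GL T39_rep_x.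
Definition T39_Y : blockGL := natmx_GL T39_rep_y.

Lemma natmx_blocks_relations :
  [/\ natmx_blocks T39_rep_x ^+ 13 = 1, natmx_blocks T39_rep_y ^+ 3 = 1 &
      natmx_blocks T39_rep_x * natmx_blocks T39_rep_y
        = natmx_blocks T39_rep_y * natmx_blocks T39_rep_x ^+ 3].
Proof.
split; apply/ffunP => i; have [X13 Y3 XY] := T39_rep_relations (ltn_ord i).
- by rewrite (ffun_exprE (natmx_blocks _)) !ffunE -(to_mx_exp _ charF3) X13 to_mx1.
- by rewrite (ffun_exprE (natmx_blocks _)) !ffunE -(to_mx_exp _ charF3) Y3 to_mx1.
rewrite ffun_mulE [RHS]ffun_mulE (ffun_exprE (natmx_blocks _)) !ffunE -(to_mx_exp _ charF3).
by rewrite -!mulmxE -!(to_mx_mul _ charF3) XY.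
Qed.

Lemma blocks_T39_X : blocks T39_X = natmx_blocks T39_rep_x.
Proof. by have [X13 _ _] := natmx_blocks_relations; rewrite (blocks_natmx_GL X13). Qed.

Lemma blocks_T39_Y : blocks T39_Y = natmx_blocks T39_rep_y.
Proof. by have [_ Y3 _] := natmx_blocks_relations; rewrite (blocks_natmx_GL Y3). Qed.

Lemma T39_X_order : (T39_X ^+ 13 = 1)%g.
Proof.
by apply: blocks_inj; rewrite blocksX blocks1 blocks_T39_X; case: natmx_blocks_relations.
Qed.

Lemma T39_Y_order : (T39_Y ^+ 3 = 1)%g.
Proof.
by apply: blocks_inj; rewrite blocksX blocks1 blocks_T39_Y; case: natmx_blocks_relations.
Qed.

Lemma T39_XY : (T39_X ^ T39_Y = T39_X ^+ 3)%g.
Proof.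
suff XY : (T39_X * T39_Y = T39_Y * T39_X ^+ 3)%g by rewrite /conjg XY mulKg.
apply: blocks_inj; rewrite blocksM blocksM blocksX blocks_T39_X blocks_T39_Y.
by case: natmx_blocks_relations.
Qed.

Lemma T39_X_neq1 : (T39_X != 1)%g.
Proof.
apply/eqP => /(congr1 (fun g => blocks g (lift ord0 ord0) ord0 ord0)).
by rewrite blocks_T39_X blocks1 !ffunE !mxE => /eqP; rewrite eq_sym oner_eq0.
Qed.

Lemma T39_Y_neq1 : (T39_Y != 1)%g.
Proof.
apply/eqP => /(congr1 (fun g => blocks g (lift ord0 ord0) ord0 ord0)).
by rewrite blocks_T39_Y blocks1 !ffunE !mxE => /eqP; rewrite eq_sym oner_eq0.
Qed.

End T39Representation.

Section BlockCoordinates.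
Variable R : comNzRingType.

Definition block_coord (b : blockmx R) : 'rV[R]_39 :=
  \row_c let: (m, r, s) := fourier_coord_pos c in b (inord m) (inord r) (inord s).

Lemma block_coord_inj (b b' : blockmx R) :
  is_toeplitz (b ord0) -> is_toeplitz (b' ord0) -> block_coord b = block_coord b' -> b = b'.
Proof.
move=> tb tb' /rowP e; apply/ffunP => m; apply/matrixP => r s.
have [-> | m0] := eqVneq m ord0.
  rewrite tb tb'; case: ifP => // _; rewrite /toeplitz_coef.
  have lt_sr : (s - r < 3)%N by rewrite (leq_ltn_trans (leq_subr _ _)).
  have := e (Ordinal (leq_trans lt_sr (isT : 3 <= 39)%N)).
  have inord0 n : inord 0 = ord0 :> 'I_n.+1 by apply: val_inj; rewrite /= inordK.
  by rewrite !mxE /fourier_coord_pos /= lt_sr !inord0.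
have lt_c : (3 + 9 * m.-1 + 3 * r + s < 39)%N.
  by have := ltn_ord m; have := ltn_ord r; have := ltn_ord s; lia.
have := e (Ordinal lt_c); rewrite !mxE -[nat_of_ord _]/(3 + 9 * m.-1 + 3 * r + s)%N.
by rewrite fourier_coord_posK ?ltn_ord ?lt0n ?andbT // !inord_val.
Qed.

End BlockCoordinates.

Section GroupAlgebraUnits.
Variables (F : finFieldType) (charF3 : (3 \in [pchar F])%N).
Variables (gT : finGroupType) (G : {group gT}) (phi : {morphism G >-> blockGL F}).
Hypotheses (injphi : ('injm phi)%g) (imphi : (phi @* G = <[T39_X F]> <*> <[T39_Y F]>)%g).

Local Notation X := (T39_X F).
Local Notation Y := (T39_Y F).
Local Notation elt := (cycle_join_elt 13 3 X Y).

Lemma T39_join_enum : (<[X]> <*> <[Y]> = [set elt p | p : 'I_39])%g /\ injective elt.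
Proof.
have nXY : (X ^ Y \in <[X]>)%g by rewrite (T39_XY charF3) mem_cycle.
have X13 := T39_X_order charF3; have Y3 := T39_Y_order charF3.
have ntX := T39_X_neq1 charF3; have ntY := T39_Y_neq1 charF3.
by split; [apply: (@cycle_join_enum _ 13 3) | apply: (@cycle_join_elt_inj _ 13 3)].
Qed.

Definition T39_enum (p : 'I_39) : gT := invm injphi (elt p).

Lemma cycle_join_elt_in_image p : elt p \in (phi @* G)%g.
Proof. by rewrite imphi (proj1 T39_join_enum) imset_f. Qed.

Lemma phi_T39_enum p : phi (T39_enum p) = elt p.
Proof. exact: invmK (cycle_join_elt_in_image p). Qed.

Lemma T39_enum_inj : injective T39_enum.
Proof. by move=> p1 p2 e; apply: (proj2 T39_join_enum); rewrite -!phi_T39_enum e. Qed.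

Lemma G_T39_enum : G :=: [set T39_enum p | p : 'I_39].
Proof.
apply/setP => g; apply/idP/imsetP => [Gg | [p _ ->]]; last first.
  have := cycle_join_elt_in_image p; rewrite morphimEdom => /imsetP[h Gh e].
  by rewrite /T39_enum e invmE.
have : phi g \in (phi @* G)%g by apply: mem_morphim.
by rewrite imphi (proj1 T39_join_enum) => /imsetP[p _ e]; exists p; rewrite // /T39_enum -e invmE.
Qed.

Lemma big_T39_enum (V : nmodType) (f : gT -> V) :
  \sum_(g in G) f g = \sum_(p < 39) f (T39_enum p).
Proof. by rewrite G_T39_enum big_imset //=; move=> p1 p2 _ _; apply: T39_enum_inj. Qed.

Definition rho (g : gT) : blockmx F := blocks (phi g).

Lemma rho_T39_enum p (i : 'I_5) : rho (T39_enum p) i = to_mx 3 (T39_rep_elt i p).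
Proof.
rewrite /rho phi_T39_enum /cycle_join_elt blocksM !blocksX blocks_T39_X // blocks_T39_Y //.
rewrite ffun_mulE !ffun_exprE !ffunE /T39_rep_elt (to_mx_mul _ charF3) mulmxE.
by rewrite !(to_mx_exp _ charF3).
Qed.

Definition fourier (a : {ffun gT -> F}) : blockmx F :=
  \sum_(g in G) a g *: rho g.

Lemma rhoM g h : g \in G -> h \in G -> rho (g * h)%g = rho g * rho h.
Proof. by move=> Gg Gh; rewrite /rho morphM // blocksM. Qed.

Lemma fourierM a b : fourier (ga_mul G a b) = fourier a * fourier b.
Proof.
apply/ffunP => i; rewrite ffun_mulE !sum_ffunE.
under eq_bigr => g _ do rewrite ffun_scaleE ffunE scaler_suml.
rewrite exchange_big /= mulr_suml; apply: eq_bigr => h Gh.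
rewrite ffun_scaleE -scalerAl mulr_sumr scaler_sumr (reindex_inj (mulgI h)) /=.
apply: eq_big => [g | g Gg]; first by rewrite groupMl.
have Gg' : g \in G by rewrite -(groupMl _ Gh).
by rewrite mulKg rhoM // ffun_mulE ffun_scaleE -scalerAr scalerA.
Qed.

Lemma fourier1 : fourier (ga_one F gT) = 1.
Proof.
rewrite /fourier (bigD1 1%g) //= big1 ?addr0 => [|g /andP[_ ntg]].
  by rewrite ffunE eqxx scale1r /rho morph1 blocks1.
by rewrite ffunE (negbTE ntg) scale0r.
Qed.

Lemma fourier_toeplitz a : is_toeplitz (fourier a ord0).
Proof.
rewrite sum_ffunE; under eq_bigr do rewrite ffun_scaleE.
apply: is_toeplitz_sum => g; rewrite G_T39_enum => /imsetP[p _ ->].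
have [X0 Y0] := T39_rep_block0 F.
rewrite rho_T39_enum /T39_rep_elt (to_mx_mul _ charF3) mulmxE !(to_mx_exp _ charF3) X0 Y0.
by apply: is_toeplitzM; apply: is_toeplitzX; apply: toeplitz_is_toeplitz.
Qed.


Definition group_coord (a : {ffun gT -> F}) : 'rV[F]_39 := \row_p a (T39_enum p).

Lemma block_coord_fourier a :
  block_coord (fourier a) = group_coord a *m to_mx 39 fourier_table.
Proof.
apply/rowP => c; rewrite !mxE.
have := fourier_coord_pos_bound (ltn_ord c).
case E : fourier_coord_pos => [[m r] s] /and3P[lt_m lt_r lt_s].
rewrite sum_ffunE summxE big_T39_enum; apply: eq_bigr => p _.
rewrite ffun_scaleE !mxE rho_T39_enum !mxE !inordK //.
by rewrite /natmx_entry /fourier_table (nth_mkseq _ _ (ltn_ord p)) (nth_mkseq _ _ (ltn_ord c)) E.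
Qed.

Lemma to_mx_fourier_tableK : to_mx 39 fourier_table *m to_mx 39 fourier_inv = 1%:M :> 'M[F]_39.
Proof. by rewrite -(to_mx_mul _ charF3) fourier_tableK to_mx1. Qed.

Definition inv_fourier (b : blockmx F) : {ffun gT -> F} :=
  [ffun g => if [pick p | T39_enum p == g] is Some p
             then (block_coord b *m to_mx 39 fourier_inv) 0 p else 0].

Lemma group_coord_inv_fourier (b : blockmx F) :
  group_coord (inv_fourier b) = block_coord b *m to_mx 39 fourier_inv.
Proof.
apply/rowP => p; rewrite [LHS]mxE ffunE.
by case: pickP => [q /eqP/T39_enum_inj -> // | /(_ p)]; rewrite /= eqxx.
Qed.

Lemma inv_fourier_supp (b : blockmx F) : ga_supp G (inv_fourier b).
Proof.
apply/forallP => g; apply/implyP => Gg; rewrite ffunE; case: pickP => // p /eqP gp.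
by move: Gg; rewrite -gp G_T39_enum imset_f.
Qed.

Lemma fourier_inj a a' : ga_supp G a -> ga_supp G a' -> fourier a = fourier a' -> a = a'.
Proof.
move=> /forallP sa /forallP sa' e.
have /rowP ea : group_coord a = group_coord a'.
  by rewrite -[LHS]mulmx1 -[RHS]mulmx1 -to_mx_fourier_tableK !mulmxA -!block_coord_fourier e.
apply/ffunP => g; have [Gg | Gg] := boolP (g \in G).
  by move: Gg; rewrite G_T39_enum => /imsetP[p _ ->]; have := ea p; rewrite !mxE.
by move: (sa g) (sa' g); rewrite Gg => /eqP -> /eqP ->.
Qed.

Lemma inv_fourierK (b : blockmx F) :
  is_toeplitz (b ord0) -> fourier (inv_fourier b) = b.
Proof.
move=> tb; apply: block_coord_inj (fourier_toeplitz _) tb _.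
rewrite block_coord_fourier group_coord_inv_fourier -mulmxA mulmx1C ?mulmx1 //.
exact: to_mx_fourier_tableK.
Qed.

Definition block_unit (b : blockmx F) : Prop :=
  [/\ is_toeplitz (b ord0), toeplitz_coef (b ord0) 0 != 0
    & forall j : 'I_4, b (lift ord0 j) \is a GRing.unit].

Variables (n : nat) (crd : F -> {ffun 'I_n -> 'Z_3}) (lg : F -> 'Z_(3 ^ n - 1)).
Hypotheses (crdD : {morph crd : x y / x + y}) (crd_bij : bijective crd).
Hypotheses (lgM : {in predC1 0 &, {morph lg : a b / a * b >-> a + b}})
  (lg_inj : {in predC1 0 &, injective lg}) (lg_surj : forall k, exists2 a, a != 0 & lg a = k).

Definition block_target (b : blockmx F) : target n F :=
  (ffun_pair (crd (toeplitz_log (b ord0)).1) (crd (toeplitz_log (b ord0)).2),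
   lg (toeplitz_coef (b ord0) 0), [ffun j => mkGL (b (lift ord0 j))]).

Lemma block_targetM (b1 b2 : blockmx F) : block_unit b1 -> block_unit b2 ->
  block_target (b1 * b2) = target_mul (block_target b1) (block_target b2).
Proof.
move=> [t1 a1 u1] [t2 a2 u2].
rewrite /block_target /target_mul ffun_mulE toeplitz_logM // toeplitz_coef0M //.
set L1 := toeplitz_log (b1 ord0); set L2 := toeplitz_log (b2 ord0) => /=.
rewrite !crdD ffun_pairD lgM ?inE //.
by congr (_, _, _); apply/ffunP => j; rewrite !ffunE mkGLM.
Qed.

Lemma block_target_inj (b1 b2 : blockmx F) : block_unit b1 -> block_unit b2 ->
  block_target b1 = block_target b2 -> b1 = b2.
Proof.
move=> [t1 a1 u1] [t2 a2 u2] [/ffun_pair_inj[e1 e2] /lg_inj e0 eg].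
have {}e0 : toeplitz_coef (b1 ord0) 0 = toeplitz_coef (b2 ord0) 0 by apply: e0; rewrite inE.
apply/ffunP => m; case: (unliftP ord0 m) => [j -> | ->].
  have := congr1 (fun f : {ffun 'I_4 -> {'GL_3[F]}} => GLval (f j)) eg.
  by rewrite /= !ffunE !mkGLK.
apply: toeplitz_log_inj => //; move: (bij_inj crd_bij e1) (bij_inj crd_bij e2).
by rewrite /toeplitz_log /= => e1' e2'; rewrite e2' e1'.
Qed.

Lemma block_target_surj t : exists2 b, block_unit b & block_target b = t.
Proof.
case: t => [[z k] gs]; have [u [v <-]] := ffun_pair_surj z.
have [a a_neq0 <-] := lg_surj k; have [dec crdK decK] := crd_bij.
pose b : blockmx F := [ffun m => if unlift ord0 m is Some j then GLval (gs j)
  else toeplitz a (a * dec u) (a * (dec v - dec u ^+ 2))].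
have b0 : b ord0 = toeplitz a (a * dec u) (a * (dec v - dec u ^+ 2)) by rewrite ffunE unlift_none.
exists b; first split.
- by rewrite b0; apply: toeplitz_is_toeplitz.
- by rewrite b0 toeplitz_coefE.
- by move=> j; rewrite ffunE liftK; exact: (GL_unit (gs j)).
rewrite /block_target b0 toeplitz_logK // toeplitz_coefE //= !decK.
congr (_, _, _); apply/ffunP => j; rewrite !ffunE liftK.
by apply: val_inj; exact: (mkGLK (GL_unit (gs j))).
Qed.

Lemma block_unit_inv (b : blockmx F) : block_unit b ->
  exists2 b' : blockmx F, is_toeplitz (b' ord0) & b * b' = 1 /\ b' * b = 1.
Proof.
move=> [tb a_neq0 ub].
have [a' [u' [v' [e1 e2]]]] :=
  toeplitz_unit (toeplitz_coef (b ord0) 1) (toeplitz_coef (b ord0) 2) a_neq0.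
pose b' : blockmx F :=
  [ffun m => if unlift ord0 m is Some _ then (b m)^-1 else toeplitz a' u' v'].
exists b'; first by rewrite ffunE unlift_none; apply: toeplitz_is_toeplitz.
split; apply/ffunP => m; rewrite ffun_mulE !ffunE; case: (unliftP ord0 m) => [j -> | ->].
- by rewrite mulrV.
- by rewrite {1}(is_toeplitzE tb) e1.
- by rewrite mulVr.
by rewrite {1}(is_toeplitzE tb) e2.
Qed.

Lemma block_unit_of_inv (b b' : blockmx F) :
    is_toeplitz (b ord0) -> is_toeplitz (b' ord0) ->
  b * b' = 1 -> block_unit b.
Proof.
move=> tb tb' e; split => // [|j].
  have := congr1 (fun f : blockmx F => toeplitz_coef (f ord0) 0) e.
  rewrite ffun_mulE toeplitz_coef0M // ffunE -toeplitz1 toeplitz_coefE //= => e0.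
  by apply/eqP => a0; move: e0; rewrite a0 mul0r => /eqP; rewrite eq_sym oner_eq0.
have := congr1 (fun f : blockmx F => f (lift ord0 j)) e.
by rewrite ffun_mulE ffunE => /mulmx1_unit[].
Qed.

Lemma ga_units_block_unit a : a \in ga_units F G -> ga_supp G a /\ block_unit (fourier a).
Proof.
rewrite inE => /andP[sa /existsP[b /and3P[_ /eqP ab _]]]; split => //.
apply: (block_unit_of_inv (fourier_toeplitz a) (fourier_toeplitz b)).
by rewrite -fourierM ab fourier1.
Qed.

Lemma inv_fourier_units (b : blockmx F) :
  block_unit b -> inv_fourier b \in ga_units F G.
Proof.
move=> ub; have [b' tb' [bb' b'b]] := block_unit_inv ub; have [tb _ _] := ub.
rewrite inE inv_fourier_supp /=; apply/existsP; exists (inv_fourier b').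
rewrite inv_fourier_supp /=; apply/andP; split; apply/eqP; apply: fourier_inj;
  by rewrite ?ga_mul_supp ?ga_one_supp ?inv_fourier_supp // fourierM fourier1 !inv_fourierK.
Qed.

Lemma ga_units_target_iso :
  exists f : {ffun gT -> F} -> target n F,
    [/\ {in ga_units F G &, injective f},
        (forall t : target n F, exists2 a, a \in ga_units F G & f a = t) &
        {in ga_units F G &, forall a b, f (ga_mul G a b) = target_mul (f a) (f b)}].
Proof.
exists (fun a => block_target (fourier a)); split.
- move=> a a' /ga_units_block_unit[sa ua] /ga_units_block_unit[sa' ua'] e.
  exact: fourier_inj sa sa' (block_target_inj ua ua' e).
- move=> t; have [b ub <-] := block_target_surj t.
  by exists (inv_fourier b); rewrite ?inv_fourier_units // inv_fourierK //; case: ub.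
- move=> a b /ga_units_block_unit[_ ua] /ga_units_block_unit[_ ub].
  by rewrite fourierM block_targetM.
Qed.

End GroupAlgebraUnits.

Local Close Scope ring_scope.

Theorem theorem4p1 (n : nat) (F : finFieldType) (gT : finGroupType) (G : {group gT}) :
  (1 <= n)%N -> #|F| = (3 ^ n)%N ->
  (G \isog Grp (x : y : (x ^+ 13 = 1, y ^+ 3 = 1, x ^ y = x ^+ 3)))%g ->
  exists f : {ffun gT -> F} -> target n F,
    [/\ {in ga_units F G &, injective f},
        (forall t : target n F, exists2 a, a \in ga_units F G & f a = t) &
        {in ga_units F G &, forall a b, f (ga_mul G a b) = target_mul (f a) (f b)}].
Proof.
move=> n_gt0 cardF isoG.
have charF3 : (3 \in [pchar F]%R)%N by apply: card_finPcharP cardF _.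
have /isogP[phi injphi imphi] := T39_isog_join isoG (T39_X_order charF3) (T39_Y_order charF3)
  (T39_XY charF3) (T39_X_neq1 charF3) (T39_Y_neq1 charF3).
have [crd [crdD crd_bij]] := finField_coords charF3 cardF.
have cardF' : #|F| = (3 ^ n - 1).+1 by rewrite cardF subn1 prednK ?expn_gt0.
have le3 : (3 <= 3 ^ n)%N by rewrite -{1}(expn1 3) leq_exp2l.
have m_gt1 : (1 < 3 ^ n - 1)%N by lia.
have [lg [lgM lg_inj lg_surj]] := finField_log cardF' m_gt1.
exact: (ga_units_target_iso charF3 injphi imphi crdD crd_bij lgM lg_inj lg_surj).
Qed.
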